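(* Let $\eta_i\ge0$ with $\sum_i\eta_i<\infty$ and at least one $\eta_i>0$, fix $N>0$, and let $\kappa,\gamma,q_i$ be as in the context. Define $E=\frac{1}{1-\gamma}\sum_iq_i^2\eta_i^2$ (single-task error, $E_A=E_B$ when $N_A=N_B=N$), $E_{ave}=(1-\gamma/2)E$ (error of the averaged model $(f_A+f_B)/2$), and $E_{A\to B}(1)=\frac{1}{(1-\gamma)^2}\sum_iq_i^4\eta_i^2$ (sequential error with $\rho=1$). Then $E_{A\to B}(1)< E_{ave}< E$.
   Context: $\kappa>0$ is the solution of $1=\sum_i\eta_i/(\kappa+N\eta_i)$, $\gamma=\sum_iN\eta_i^2/(\kappa+N\eta_i)^2$ (so $0<\gamma<1$), and $q_i=\kappa/(\kappa+N\eta_i)$. These expressions are the replica-method generalization errors in the noise-free equal-sample-size setting $N_A=N_B=N$ with identical targets. *)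

From Stdlib Require Import Reals.
From Coquelicot Require Import Coquelicot.
Open Scope R_scope.

Definition qcoef (eta : nat -> R) (N kappa : R) (i : nat) : R :=
  kappa / (kappa + N * eta i).

Definition gammaR (eta : nat -> R) (N kappa : R) : R :=
  Series (fun i => N * (eta i)^2 / (kappa + N * eta i)^2).

Definition E_single (eta : nat -> R) (N kappa : R) : R :=
  / (1 - gammaR eta N kappa) *
  Series (fun i => (qcoef eta N kappa i)^2 * (eta i)^2).

Definition E_ave (eta : nat -> R) (N kappa : R) : R :=
  (1 - gammaR eta N kappa / 2) * E_single eta N kappa.

Definition E_seq1 (eta : nat -> R) (N kappa : R) : R :=
  / (1 - gammaR eta N kappa)^2 *
  Series (fun i => (qcoef eta N kappa i)^4 * (eta i)^2).

(* Write w_i = eta_i / (kappa + N eta_i) and x_i = N w_i in [0, 1).  The constraint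
   defining kappa says that w is a probability distribution on the modes, and
   q_i eta_i = kappa w_i, q_i = 1 - x_i.  Hence, with m = E_w[x] = gamma,
   E = (kappa^2/N) m/(1-m) and E_seq1 = (kappa^2/N) E_w[x (1-x)^2]/(1-m)^2, so
   E_ave < E because 0 < m, and E_seq1 < E_ave reduces to
   E_w[x (1-x)^2] < m (1-m) (1-m/2).  The latter follows by averaging a
   decomposition of the cubic x (1-x)^2 into an affine function of x, whose mean
   is m (1-m) (1-m/2), minus a remainder that is nonnegative on [0, 1) and
   positive for x > 0. *)
From Stdlib Require Import Reals Lra.
From Coquelicot Require Import Coquelicot.
Open Scope R_scope.

Lemma sum_f_R0_ge_term (a : nat -> R) (n : nat) :
  (forall i, 0 <= a i) -> a n <= sum_f_R0 a n.
Proof.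
  intros a_ge0; destruct n as [|n]; simpl; [lra|].
  pose proof (cond_pos_sum a n a_ge0); lra.
Qed.

Lemma is_series_gt0 (a : nat -> R) (l : R) (k : nat) :
  is_series a l -> (forall i, 0 <= a i) -> 0 < a k -> 0 < l.
Proof.
  intros a_l a_ge0 ak_gt0.
  apply is_series_Reals in a_l.
  pose proof (sum_incr a k l a_l a_ge0).
  pose proof (sum_f_R0_ge_term a k a_ge0); lra.
Qed.

Lemma cubic_decomposition (x m : R) :
  x * (1 - x) ^ 2 =
  m * (1 - m) * (1 - m / 2) + (1 - 3 * m + 3 / 2 * m ^ 2) * (x - m)
  - ((x - m) ^ 2 * (3 / 2 - x / 2 - m) + x ^ 2 * (1 - x) / 2).
Proof. field. Qed.

Section WeightedMean.

Variables w x : nat -> R.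
Hypothesis w_ge0 : forall i, 0 <= w i.
Hypothesis w_sum1 : is_series w 1.
Hypothesis x_ge0 : forall i, 0 <= x i.
Hypothesis x_lt1 : forall i, x i < 1.

Lemma is_series_weighted (g : nat -> R) :
  (forall i, 0 <= g i <= 1) -> is_series (fun i => w i * g i) (Series (fun i => w i * g i)).
Proof.
  intros g_bnd; apply Series_correct, (ex_series_le (V := R_CompleteNormedModule) _ w);
    [|now exists 1].
  intro i; change norm with Rabs; simpl.
  specialize (w_ge0 i); specialize (g_bnd i).
  rewrite Rabs_pos_eq; nra.
Qed.

Let m := Series (fun i => w i * x i).

Lemma is_series_mean : is_series (fun i => w i * x i) m.
Proof. apply is_series_weighted; intro i; specialize (x_lt1 i); specialize (x_ge0 i); lra. Qed.

Lemma mean_bounds (k : nat) : 0 < w k -> 0 < x k -> 0 < m < 1.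
Proof.
  intros wk_gt0 xk_gt0; split.
  - apply (is_series_gt0 _ _ k is_series_mean); [|nra].
    intro i; specialize (w_ge0 i); specialize (x_ge0 i); nra.
  - enough (0 < 1 - m) by lra.
    apply (is_series_gt0 (fun i => w i - w i * x i) _ k).
    + exact (is_series_minus _ _ _ _ w_sum1 is_series_mean).
    + intro i; specialize (w_ge0 i); specialize (x_lt1 i); simpl; nra.
    + specialize (x_lt1 k); simpl; nra.
Qed.

Lemma mean_cubic_lt (k : nat) : 0 < w k -> 0 < x k ->
  Series (fun i => w i * (x i * (1 - x i) ^ 2)) < m * (1 - m) * (1 - m / 2).
Proof.
  intros wk_gt0 xk_gt0.
  destruct (mean_bounds k wk_gt0 xk_gt0) as [m_gt0 m_lt1].
  set (c := m * (1 - m) * (1 - m / 2)).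
  set (b := 1 - 3 * m + 3 / 2 * m ^ 2).
  set (r := fun y => (y - m) ^ 2 * (3 / 2 - y / 2 - m) + y ^ 2 * (1 - y) / 2).
  set (s := Series (fun i => w i * (x i * (1 - x i) ^ 2))).
  assert (cubic : is_series (fun i => w i * (x i * (1 - x i) ^ 2)) s).
  { apply is_series_weighted; intro i.
    specialize (x_lt1 i); specialize (x_ge0 i).
    assert (0 <= (1 - x i) ^ 2 <= 1) by (simpl; nra).
    split; [apply Rmult_le_pos; lra|].
    rewrite <- (Rmult_1_r 1); apply Rmult_le_compat; lra. }
  assert (pointwise : forall i,
    c * w i + b * (w i * x i - m * w i) - w i * (x i * (1 - x i) ^ 2) = w i * r (x i)).
  { intro i; unfold r, c, b; rewrite (cubic_decomposition (x i) m); field. }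
  assert (remainder : is_series (fun i => w i * r (x i)) (c * 1 + b * (m - m * 1) - s)).
  { apply (is_series_ext _ _ _ pointwise).
    pose proof (is_series_minus _ _ _ _ is_series_mean (is_series_scal_l m _ _ w_sum1))
      as centred.
    pose proof (is_series_plus _ _ _ _ (is_series_scal_l c _ _ w_sum1)
                  (is_series_scal_l b _ _ centred)) as affine.
    exact (is_series_minus _ _ _ _ affine cubic). }
  replace (c * 1 + b * (m - m * 1) - s) with (c - s) in remainder by ring.
  enough (0 < c - s) by (unfold c in *; lra).
  apply (is_series_gt0 _ _ k remainder).
  - intro i; unfold r; specialize (w_ge0 i); specialize (x_lt1 i); specialize (x_ge0 i).
    apply Rmult_le_pos; [lra|].
    assert (0 <= (x i - m) ^ 2) by apply pow2_ge_0.
    assert (0 <= x i ^ 2) by apply pow2_ge_0.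
    nra.
  - unfold r; specialize (x_lt1 k).
    apply Rmult_lt_0_compat; [lra|].
    assert (0 <= (x k - m) ^ 2) by apply pow2_ge_0.
    assert (0 < x k ^ 2) by (apply pow_lt; lra).
    nra.
Qed.

End WeightedMean.

Lemma error_ordering (c m s : R) :
  0 < c -> 0 < m < 1 -> s < m * (1 - m) * (1 - m / 2) ->
  / (1 - m) ^ 2 * (c * s) < (1 - m / 2) * (/ (1 - m) * (c * m)) /\
  (1 - m / 2) * (/ (1 - m) * (c * m)) < / (1 - m) * (c * m).
Proof.
  intros c_gt0 [m_gt0 m_lt1] s_lt.
  assert (gap_gt0 : 0 < m * (1 - m) * (1 - m / 2) - s) by lra.
  split; apply Rlt_0_minus.
  - replace (_ - _) with (c / (1 - m) ^ 2 * (m * (1 - m) * (1 - m / 2) - s)) by (field; lra).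
    apply Rmult_lt_0_compat; [apply Rdiv_lt_0_compat; [|apply pow_lt]; lra|exact gap_gt0].
  - replace (_ - _) with (c / (1 - m) * (m * m / 2)) by (field; lra).
    apply Rmult_lt_0_compat; [apply Rdiv_lt_0_compat|]; nra.
Qed.

Section Spectrum.

Variables (eta : nat -> R) (N kappa : R).
Hypothesis eta_ge0 : forall i, 0 <= eta i.
Hypothesis N_gt0 : 0 < N.
Hypothesis kappa_gt0 : 0 < kappa.

Definition weight (i : nat) : R := eta i / (kappa + N * eta i).

Lemma denom_gt0 (i : nat) : 0 < kappa + N * eta i.
Proof. specialize (eta_ge0 i); nra. Qed.

Lemma weight_ge0 (i : nat) : 0 <= weight i.
Proof. apply Rdiv_le_0_compat; [apply eta_ge0|apply denom_gt0]. Qed.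

Lemma scaled_weight_lt1 (i : nat) : N * weight i < 1.
Proof.
  unfold weight; pose proof (denom_gt0 i).
  replace (N * (eta i / (kappa + N * eta i))) with (1 - kappa / (kappa + N * eta i))
    by (field; lra).
  enough (0 < kappa / (kappa + N * eta i)) by lra.
  now apply Rdiv_lt_0_compat.
Qed.

Lemma gammaR_weight :
  gammaR eta N kappa = Series (fun i => weight i * (N * weight i)).
Proof.
  apply Series_ext; intro i; unfold weight; pose proof (denom_gt0 i); field; lra.
Qed.

Lemma Series_qcoef2 :
  Series (fun i => qcoef eta N kappa i ^ 2 * eta i ^ 2)
  = kappa ^ 2 / N * Series (fun i => weight i * (N * weight i)).
Proof.
  rewrite <- Series_scal_l; apply Series_ext; intro i.
  unfold qcoef, weight; pose proof (denom_gt0 i); field; lra.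
Qed.

Lemma Series_qcoef4 :
  Series (fun i => qcoef eta N kappa i ^ 4 * eta i ^ 2)
  = kappa ^ 2 / N *
    Series (fun i => weight i * (N * weight i * (1 - N * weight i) ^ 2)).
Proof.
  rewrite <- Series_scal_l; apply Series_ext; intro i.
  unfold qcoef, weight; pose proof (denom_gt0 i); field; lra.
Qed.

End Spectrum.

Theorem proposition3 (eta : nat -> R) (N kappa : R) :
  (forall i, 0 <= eta i) ->
  ex_series eta ->
  (exists i, 0 < eta i) ->
  0 < N ->
  0 < kappa ->
  is_series (fun i => eta i / (kappa + N * eta i)) 1 ->
  E_seq1 eta N kappa < E_ave eta N kappa /\ E_ave eta N kappa < E_single eta N kappa.
Proof.
  intros eta_ge0 _ [k etak_gt0] N_gt0 kappa_gt0 weight_sum1.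
  set (w := weight eta N kappa).
  set (x := fun i => N * w i).
  assert (wk_gt0 : 0 < w k) by (apply Rdiv_lt_0_compat; [|apply denom_gt0]; assumption).
  assert (xk_gt0 : 0 < x k) by (apply Rmult_lt_0_compat; assumption).
  assert (x_ge0 : forall i, 0 <= x i).
  { intro i; apply Rmult_le_pos; [lra|apply weight_ge0; assumption]. }
  assert (x_lt1 : forall i, x i < 1) by (intro i; apply scaled_weight_lt1; assumption).
  pose proof (weight_ge0 eta N kappa eta_ge0 N_gt0 kappa_gt0) as w_ge0.
  unfold E_seq1, E_ave, E_single.
  rewrite gammaR_weight, Series_qcoef2, Series_qcoef4 by assumption.
  apply error_ordering.
  - apply Rdiv_lt_0_compat; [apply pow_lt|]; assumption.
  - exact (mean_bounds w x w_ge0 weight_sum1 x_ge0 x_lt1 k wk_gt0 xk_gt0).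
  - exact (mean_cubic_lt w x w_ge0 weight_sum1 x_ge0 x_lt1 k wk_gt0 xk_gt0).
Qed.
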